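(* For every finite alphabet $\Sigma$, every word $x\in\Sigma^*$ and every $\varepsilon>0$, there is a 3-state AfA that accepts $x$ with probability $1$ and accepts every word $z\in\Sigma^*$ with $z\neq x$ with probability at most $\varepsilon$.
   Context: An $n$-state affine finite automaton (AfA) over $\Sigma$ consists of real $n\times n$ matrices $A_\sigma$ for $\sigma\in\Sigma\cup\{\$\}$ ($\$$ a right end-marker), each of whose columns sums to $1$; an initial vector $v_0\in\mathbb{R}^n$ with entries summing to $1$; and a set $E_a$ of accepting states. On input $w=w_1\cdots w_k$ the final vector is $v_f=A_\$A_{w_k}\cdots A_{w_1}v_0$, and $w$ is accepted with probability $\sum_{j\in E_a}|v_f[j]|\big/\sum_{j=1}^n|v_f[j]|$. *)

From HB Require Import structures.
From mathcomp Require Import all_boot all_order all_algebra.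
Set Implicit Arguments. Unset Strict Implicit. Unset Printing Implicit Defensive.
Import Order.TTheory GRing.Theory Num.Theory.
Local Open Scope ring_scope.

Record AfA (R : realFieldType) (Sigma : finType) (n : nat) := MkAfA {
  afa_mx : Sigma -> 'M[R]_n;
  afa_end : 'M[R]_n;
  afa_init : 'cV[R]_n;
  afa_acc : {set 'I_n}
}.

Definition col_stochastic_affine (R : realFieldType) n (A : 'M[R]_n) : Prop :=
  forall j : 'I_n, \sum_(i < n) A i j = 1.

Definition wf_AfA (R : realFieldType) (Sigma : finType) n (M : AfA R Sigma n) : Prop :=
  (forall s : Sigma, col_stochastic_affine (afa_mx M s)) /\
  col_stochastic_affine (afa_end M) /\
  \sum_(i < n) afa_init M i 0 = 1.

Definition afa_final (R : realFieldType) (Sigma : finType) n (M : AfA R Sigma n)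
  (w : seq Sigma) : 'cV[R]_n :=
  afa_end M *m foldl (fun v s => afa_mx M s *m v) (afa_init M) w.

Definition afa_accept_prob (R : realFieldType) (Sigma : finType) n (M : AfA R Sigma n)
  (w : seq Sigma) : R :=
  let vf := afa_final M w in
  (\sum_(j in afa_acc M) `|vf j 0|) / (\sum_(j < n) `|vf j 0|).

From HB Require Import structures.
From mathcomp Require Import all_boot all_order all_algebra.
From mathcomp Require Import ring lra.
Import Order.TTheory GRing.Theory Num.Theory.
Set Implicit Arguments. Unset Strict Implicit. Unset Printing Implicit Defensive.
Local Open Scope ring_scope.

(* Words are coded injectively by naturals, reading letters as nonzero digits
   in base |Sigma|+1.  The automaton keeps its state on the affine line
   (F, 1 - F, 0), each letter acting by F |-> (|Sigma|+1) F + digit, so after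
   reading w the state is F = code w.  The end-marker sends it to (1, t, -t) with
   t = (code w - code x) / eps, which is accepted with probability
   1 / (1 + 2 |t|): this is 1 for w = x and at most eps otherwise, because
   distinct codes differ by at least 1. *)

Section WordCode.
Variables (Sigma : eqType) (b : nat) (digit : Sigma -> nat).
Hypotheses (digit_inj : injective digit) (digit_gt0 : forall s, (0 < digit s)%N)
  (digit_lt : forall s, (digit s < b)%N).

Definition word_code (w : seq Sigma) : nat := foldl (fun n s => n * b + digit s)%N 0%N w.

Lemma word_code_rcons w s : word_code (rcons w s) = (word_code w * b + digit s)%N.
Proof. by rewrite /word_code foldl_rcons. Qed.

Lemma word_code_rcons_gt0 w s : (0 < word_code (rcons w s))%N.
Proof. by rewrite word_code_rcons ltn_addl. Qed.

Lemma word_code_inj : injective word_code.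
Proof.
elim/last_ind=> [|w1 s1 IH] w2; case/lastP: w2 => [|w2 s2] //.
- by move=> E; have := word_code_rcons_gt0 w2 s2; rewrite -E.
- by move=> E; have := word_code_rcons_gt0 w1 s1; rewrite E.
have b_gt0 : (0 < b)%N := leq_ltn_trans (leq0n _) (digit_lt s1).
rewrite !word_code_rcons => E; have /eqP := congr1 (modn^~ b) E.
rewrite !modnMDl !modn_small // => /eqP/digit_inj es; subst s2.
by move/eqP: E; rewrite eqn_add2r eqn_mul2r gtn_eqF // => /eqP/IH ->.
Qed.

End WordCode.

Lemma natr_dist_ge1 (R : numDomainType) (m n : nat) : m <> n -> 1 <= `|m%:R - n%:R : R|.
Proof.
have dist_ge1 p q : (p < q)%N -> 1 <= `|q%:R - p%:R : R|.
  by move=> lt_pq; rewrite -(natrB R (ltnW lt_pq)) ger0_norm ?ler0n // ler1n subn_gt0.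
by move=> /eqP; rewrite neq_ltn => /orP[] /dist_ge1 //; rewrite distrC.
Qed.

Section ThreeStates.
Variable R : realFieldType.

Definition mx3 (e : nat -> nat -> R) : 'M[R]_3 := \matrix_(i, j) e (i : nat) (j : nat).

Lemma sum_ord3 (f : 'I_3 -> R) : \sum_(i < 3) f i = f 0 + f 1 + f 2%:R.
Proof.
rewrite !big_ord_recl big_ord0 addr0 addrA.
by congr (f _ + f _ + f _); apply/val_inj.
Qed.

Lemma mulmx3_col (A : 'M[R]_3) (v : 'cV[R]_3) i :
  (A *m v) i 0 = A i 0 * v 0 0 + A i 1 * v 1 0 + A i 2%:R * v 2%:R 0.
Proof. by rewrite mxE sum_ord3. Qed.

Lemma col_stochastic_mx3 e :
  (forall j, (j < 3)%N -> e 0%N j + e 1%N j + e 2%N j = 1) ->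
  col_stochastic_affine (mx3 e).
Proof. by move=> H j; rewrite sum_ord3 !mxE; exact: H. Qed.

Definition affine_vec (F : R) : 'cV[R]_3 :=
  \col_i (if i == 0 :> nat then F else if i == 1 :> nat then 1 - F else 0).

(* The affine map F |-> a F + c restricted to the line of [affine_vec]. *)
Definition affine_step_mx (a c : R) : 'M[R]_3 := mx3 (fun i j =>
  match i, j with
  | 0, 0 => a + c | 0, 1 => c
  | 1, 0 => 1 - a - c | 1, 1 => 1 - c
  | 2, 2 => 1 | _, _ => 0 end).

Definition readout_mx (K c : R) : 'M[R]_3 := mx3 (fun i j =>
  match i, j with
  | 0, 0 => 1 | 0, 1 => 1
  | 1, 0 => K - K * c | 1, 1 => - (K * c)
  | 2, 0 => K * c - K | 2, 1 => K * c | 2, 2 => 1 | _, _ => 0 end).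

Definition readout_vec (t : R) : 'cV[R]_3 :=
  \col_i (if i == 0 :> nat then 1 else if i == 1 :> nat then t else - t).

Lemma affine_step_mx_stochastic a c : col_stochastic_affine (affine_step_mx a c).
Proof. by apply: col_stochastic_mx3 => -[|[|[|j]]] //= _; ring. Qed.

Lemma readout_mx_stochastic K c : col_stochastic_affine (readout_mx K c).
Proof. by apply: col_stochastic_mx3 => -[|[|[|j]]] //= _; ring. Qed.

Lemma affine_vec_sum F : \sum_(i < 3) affine_vec F i 0 = 1.
Proof. by rewrite sum_ord3 !mxE /=; ring. Qed.

Lemma mul_affine_step_mx a c F : affine_step_mx a c *m affine_vec F = affine_vec (a * F + c).
Proof.
by apply/matrixP => i j; rewrite (ord1 j) mulmx3_col !mxE; case: i => -[|[|[|i]]] //= _; ring.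
Qed.

Lemma mul_readout_mx K c F : readout_mx K c *m affine_vec F = readout_vec (K * (F - c)).
Proof.
by apply/matrixP => i j; rewrite (ord1 j) mulmx3_col !mxE; case: i => -[|[|[|i]]] //= _; ring.
Qed.

Lemma readout_vec_accept_prob t :
  (\sum_(j in [set ord0 : 'I_3]) `|readout_vec t j 0|) / (\sum_(j < 3) `|readout_vec t j 0|)
  = (1 + 2 * `|t|)^-1.
Proof. by rewrite big_set1 sum_ord3 !mxE /= normrN normr1 mul1r; congr (_^-1); ring. Qed.

Lemma inv1_add2_norm_le (eps D : R) :
  0 < eps -> 1 <= `|D| -> (1 + 2 * `|eps^-1 * D|)^-1 <= eps.
Proof.
move=> eps_gt0; rewrite normrM gtr0_norm ?invr_gt0 //; move: `|D| => {}D D_ge1.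
have T_ge0 : 0 <= eps^-1 * D by rewrite mulr_ge0 ?invr_ge0 ?ltW //; lra.
have epsD : eps * (1 + 2 * (eps^-1 * D)) = eps + 2 * D by field; exact: lt0r_neq0.
rewrite -div1r ler_pdivrMr ?epsD; first lra.
by rewrite ltr_wpDr ?ltr01 // mulr_ge0 ?ler0n.
Qed.

End ThreeStates.

Section Detector.
Variables (R : realFieldType) (Sigma : finType).

Definition letter_digit (s : Sigma) : nat := (enum_rank s).+1.
Definition enum_code (w : seq Sigma) : nat := word_code #|Sigma|.+1 letter_digit w.

Lemma enum_code_inj : injective enum_code.
Proof.
apply: word_code_inj => [s1 s2 /succn_inj/val_inj/enum_rank_inj // | // | s].
by rewrite ltnS ltn_ord.
Qed.

Definition word_detector (x : seq Sigma) (eps : R) : AfA R Sigma 3 :=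
  MkAfA (fun s => affine_step_mx #|Sigma|.+1%:R (letter_digit s)%:R)
        (readout_mx eps^-1 (enum_code x)%:R) (affine_vec 0) [set ord0].

Lemma word_detector_wf x eps : wf_AfA (word_detector x eps).
Proof.
split=> [s|]; first exact: affine_step_mx_stochastic.
by split; [exact: readout_mx_stochastic | exact: affine_vec_sum].
Qed.

Lemma word_detector_final x eps w :
  afa_final (word_detector x eps) w
  = readout_vec (eps^-1 * ((enum_code w)%:R - (enum_code x)%:R)).
Proof.
rewrite /afa_final /= -mul_readout_mx; congr (_ *m _).
elim/last_ind: w => [|w s IH] //.
by rewrite foldl_rcons IH mul_affine_step_mx /enum_code word_code_rcons natrD natrM mulrC.
Qed.

Lemma word_detector_accept_prob x eps w :
  afa_accept_prob (word_detector x eps) w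
  = (1 + 2 * `|eps^-1 * ((enum_code w)%:R - (enum_code x)%:R)|)^-1.
Proof. by rewrite /afa_accept_prob word_detector_final readout_vec_accept_prob. Qed.

End Detector.

Theorem mainTheorem11 (R : realFieldType) (Sigma : finType) (x : seq Sigma)
  (eps : R) (heps : 0 < eps) :
  exists M : AfA R Sigma 3,
    wf_AfA M /\
    afa_accept_prob M x = 1 /\
    (forall z : seq Sigma, z <> x -> afa_accept_prob M z <= eps).
Proof.
exists (word_detector x eps); split; first exact: word_detector_wf.
split=> [|z z_neq_x]; rewrite word_detector_accept_prob.
  by rewrite subrr mulr0 normr0 mulr0 addr0 invr1.
have code_neq : enum_code z <> enum_code x by move/enum_code_inj.
exact/inv1_add2_norm_le/natr_dist_ge1.
Qed.
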